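(* Let $m\ge n\ge o\ge 0$ be integers with $m+n+o\ge 4$ such that the complete tripartite graph $K_{m,n,o}$ is connected. Let the vertices of the parts of sizes $m,n,o$ carry the indeterminates $x_1,\dots,x_m$, $y_1,\dots,y_n$, $z_1,\dots,z_o$ respectively. Then the third critical ideal $I_3=I_3(K_{m,n,o},\{X,Y,Z\})\subseteq\mathbb{Z}[x_1,\dots,x_m,y_1,\dots,y_n,z_1,\dots,z_o]$ is: - $\langle 2, x_1,\dots,x_m, y_1,\dots,y_n, z_1,\dots,z_o\rangle$ if $m,n,o\ge 2$; - $\langle x_1,\dots,x_m, y_1,\dots,y_n, z_1+2\rangle$ if $m\ge2$, $n\ge 2$, $o=1$; - $\langle x_1,\dots,x_m, y_1+z_1+2\rangle$ if $m\ge 3$, $n=1$, $o=1$; - $\langle x_1x_2+x_1+x_2,\ x_1z_1+x_1,\ x_2z_1+x_2,\ y_1+z_1+2\rangle$ if $m=2$, $n=1$, $o=1$; - $\langle x_1,\dots,x_m, y_1,\dots,y_n\rangle$ if $m\ge 3$, $n\ge 3$, $o=0$; - $\langle x_1,\dots,x_m, y_1+y_2\rangle$ if $m\ge 3$, $n=2$, $o=0$; - $\langle x_2y_2,\ x_1+x_2,\ y_1+y_2\rangle$ if $m=2$, $n=2$, $o=0$; - $\langle x_1,\dots,x_m\rangle$ if $m\ge 3$, $n=1$, $o=0$.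
   Context: For a finite graph $G$ with an indeterminate $x_u$ for each vertex $u$, the generalized Laplacian matrix $L(G,X_G)$ is the matrix indexed by $V(G)$ with $(u,u)$-entry $x_u$ and $(u,v)$-entry $-m_{uv}$ for $u\ne v$, $m_{uv}$ being the number of edges between $u$ and $v$. The third critical ideal $I_3(G,X_G)$ is the ideal of $\mathbb{Z}[X_G]$ generated by all $3\times 3$ minors of $L(G,X_G)$. $K_{m,n,o}$ is the complete tripartite graph with parts of sizes $m,n,o$ (for $o=0$ it is the complete bipartite graph $K_{m,n}$). *)

From HB Require Import structures.
From mathcomp Require Import all_boot all_order all_algebra.
From mathcomp Require Import mpoly.
Set Implicit Arguments. Unset Strict Implicit. Unset Printing Implicit Defensive.
Import Order.TTheory GRing.Theory Num.Theory.
Local Open Scope ring_scope.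

Definition ideal_gen (R : comPzRingType) (S : R -> Prop) : R -> Prop :=
  fun p => exists (k : nat) (c s : 'I_k -> R),
    (forall i, S (s i)) /\ p = \sum_(i < k) c i * s i.

Definition gen_laplacian (N : nat) (mult : 'I_N -> 'I_N -> nat)
  : 'M[{mpoly int[N]}]_N :=
  \matrix_(u, v) (if u == v then 'X_u else - (mult u v)%:R).

(* A k x k minor is the determinant of the submatrix with rows f(0..k-1) and
   columns g(0..k-1) for injective f, g (reordering only changes the sign). *)
Definition critical_ideal (N : nat) (mult : 'I_N -> 'I_N -> nat) (k : nat)
  : {mpoly int[N]} -> Prop :=
  ideal_gen (fun p => exists f g : 'I_k -> 'I_N,
    injective f /\ injective g /\
    p = \det (\matrix_(i, j) gen_laplacian mult (f i) (g j))).

Definition tri_part (m n : nat) (i : nat) : nat :=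
  (if i < m then 0 else if i < m + n then 1 else 2)%N.

Definition Kmno_mult (m n o : nat) (u v : 'I_(m + n + o)) : nat :=
  if tri_part m n u != tri_part m n v then 1%N else 0%N.

Arguments Kmno_mult : clear implicits.

Definition Kmno_adj (m n o : nat) : rel 'I_(m + n + o) :=
  fun u v => Kmno_mult m n o u v != 0%N.

Arguments Kmno_adj : clear implicits.

Definition graph_connected (T : finType) (e : rel T) : Prop :=
  forall u v : T, connect e u v.

(* The variable with (0-based) index k in Z[X_0..X_{N-1}] (0 if out of range). *)
Definition Xv (N : nat) (k : nat) : {mpoly int[N]} :=
  match @insub nat (fun k => (k < N)%N) 'I_N k with Some i => 'X_i | None => 0 end.

(* Naming of the variables as in the paper (1-based):
   x_k = vertex k-1, y_k = vertex m+k-1, z_k = vertex m+n+k-1. *)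
Definition xv (m n o k : nat) : {mpoly int[m + n + o]} := Xv (m + n + o) (k.-1).
Definition yv (m n o k : nat) : {mpoly int[m + n + o]} := Xv (m + n + o) (m + k.-1)%N.
Definition zv (m n o k : nat) : {mpoly int[m + n + o]} := Xv (m + n + o) (m + n + k.-1)%N.

From HB Require Import structures.
From mathcomp Require Import all_boot all_order all_algebra.
From mathcomp Require Import mpoly.
From mathcomp Require Import ring zify.
Set Implicit Arguments. Unset Strict Implicit. Unset Printing Implicit Defensive.
Import Order.TTheory GRing.Theory Num.Theory.
Local Open Scope ring_scope.

(* Modulo each claimed ideal J, every variable X_u is congruent to a value that
   depends only on the class of u (its part, or for K_{m,2} the finer partition
   separating y_1 from y_2).  After this substitution the generalized Laplacian is a
   3 x 3 matrix C blown up along the classes, so every 3 x 3 minor is congruent mod J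
   to a multiple of det C, and det C lies in J.  For K_{2,2} and K_{2,1,1} the minors
   are instead written out in terms of the generators.  Conversely, every generator
   of J is, up to sign, a 3 x 3 minor of L or a difference of two such minors. *)

Section IdealGen.
Variable R : comPzRingType.
Implicit Types (S T : R -> Prop) (p q : R).

Lemma ideal_gen0 S : ideal_gen S 0.
Proof. by exists 0%N, (fun _ => 0), (fun _ => 0); split; [case | rewrite big_ord0]. Qed.

Lemma ideal_gen_eq0 S p : p = 0 -> ideal_gen S p.
Proof. by move=> ->; apply: ideal_gen0. Qed.

Lemma mem_ideal_gen S s : S s -> ideal_gen S s.
Proof. by exists 1%N, (fun _ => 1), (fun _ => s); rewrite big_ord1 mul1r. Qed.

Lemma ideal_genD S p q : ideal_gen S p -> ideal_gen S q -> ideal_gen S (p + q).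
Proof.
move=> [k1 [c1 [s1 [S1 ->]]]] [k2 [c2 [s2 [S2 ->]]]].
pose glue (f1 : 'I_k1 -> R) (f2 : 'I_k2 -> R) (i : 'I_(k1 + k2)) :=
  match split i with inl a => f1 a | inr b => f2 b end.
exists (k1 + k2)%N, (glue c1 c2), (glue s1 s2).
split; first by move=> i; rewrite /glue; case: (split i).
rewrite big_split_ord /glue; congr (_ + _); apply: eq_bigr => i _.
  by rewrite -[lshift _ _]/(unsplit (inl _)) unsplitK.
by rewrite -[rshift _ _]/(unsplit (inr _)) unsplitK.
Qed.

Lemma ideal_genMl S c p : ideal_gen S p -> ideal_gen S (c * p).
Proof.
move=> [k [c1 [s1 [S1 ->]]]]; exists k, (fun i => c * c1 i), s1; split=> //.
by rewrite mulr_sumr; apply: eq_bigr => i _; rewrite mulrA.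
Qed.

Lemma ideal_genMr S c p : ideal_gen S p -> ideal_gen S (p * c).
Proof. by rewrite mulrC; apply: ideal_genMl. Qed.

Lemma ideal_genN S p : ideal_gen S p -> ideal_gen S (- p).
Proof. by rewrite -mulN1r; apply: ideal_genMl. Qed.

Lemma ideal_genB S p q : ideal_gen S p -> ideal_gen S q -> ideal_gen S (p - q).
Proof. by move=> Sp Sq; apply: ideal_genD => //; apply: ideal_genN. Qed.

Lemma ideal_gen_le S T : (forall s, S s -> ideal_gen T s) ->
  forall p, ideal_gen S p -> ideal_gen T p.
Proof.
move=> ST p [k [c [s [Ss ->]]]].
apply: (big_ind (ideal_gen T)); [exact: ideal_gen0 | exact: ideal_genD |] => i _.
exact/ideal_genMl/ST.
Qed.

Lemma ideal_gen_comb3 S g1 g2 g3 a1 a2 a3 p :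
  ideal_gen S g1 -> ideal_gen S g2 -> ideal_gen S g3 ->
  p = a1 * g1 + a2 * g2 + a3 * g3 -> ideal_gen S p.
Proof. by move=> S1 S2 S3 ->; do 2?apply: ideal_genD; apply: ideal_genMl. Qed.

Lemma ideal_gen_comb4 S g1 g2 g3 g4 a1 a2 a3 a4 p :
  ideal_gen S g1 -> ideal_gen S g2 -> ideal_gen S g3 -> ideal_gen S g4 ->
  p = a1 * g1 + a2 * g2 + a3 * g3 + a4 * g4 -> ideal_gen S p.
Proof. by move=> S1 S2 S3 S4 ->; do 3?apply: ideal_genD; apply: ideal_genMl. Qed.

Lemma ideal_gen_prodB S (I : finType) (a b : I -> R) :
  (forall i, ideal_gen S (a i - b i)) -> ideal_gen S (\prod_i a i - \prod_i b i).
Proof.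
move=> Sab; apply: (big_ind2 (fun x y => ideal_gen S (x - y))) => [| x1 x2 y1 y2 S1 S2 |//].
  by rewrite subrr; apply: ideal_gen0.
have -> : x1 * y1 - x2 * y2 = (x1 - x2) * y1 + x2 * (y1 - y2) by ring.
by apply: ideal_genD; [apply: ideal_genMr | apply: ideal_genMl].
Qed.

Lemma ideal_gen_expB S a b k :
  ideal_gen S (a - b) -> ideal_gen S (a ^+ k - b ^+ k).
Proof.
move=> Sab; have := @ideal_gen_prodB S _ (fun _ : 'I_k => a) (fun _ => b).
by rewrite !prodr_const card_ord; apply.
Qed.

End IdealGen.

Lemma det_mx22 (R : comPzRingType) (A : 'M[R]_2) :
  \det A = A 0 0 * A 1 1 - A 0 1 * A 1 0.
Proof.
rewrite (expand_det_row _ 0) !big_ord_recl big_ord0 /cofactor !det_mx11 /=.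
rewrite !mxE /= /bump /= expr0 expr1.
pose F (i j : nat) := A (inord i) (inord j).
have AF i j : A i j = F i j by rewrite /F !inord_val.
rewrite !AF /=; ring.
Qed.

Lemma det_mx33 (R : comPzRingType) (A : 'M[R]_3) :
  \det A = A 0 0 * (A 1 1 * A 2 2 - A 1 2 * A 2 1)
         - A 0 1 * (A 1 0 * A 2 2 - A 1 2 * A 2 0)
         + A 0 2 * (A 1 0 * A 2 1 - A 1 1 * A 2 0).
Proof.
rewrite (expand_det_row _ 0) !big_ord_recl big_ord0 /cofactor !det_mx22 /=.
rewrite !mxE /= /bump /= expr0 expr1 expr2.
pose F (i j : nat) := A (inord i) (inord j).
have AF i j : A i j = F i j by rewrite /F !inord_val.
rewrite !AF /=; ring.
Qed.

Lemma det_mxsub (R : comPzRingType) k (C : 'M[R]_k) (s t : 'I_k -> 'I_k) :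
  \det (mxsub s t C) =
  \det (rowsub s (1%:M : 'M[R]_k)) * \det C * \det (colsub t (1%:M : 'M[R]_k)).
Proof.
have -> : mxsub s t C = rowsub s 1%:M *m (C *m colsub t 1%:M).
  rewrite mulmx_colsub mulmx1 mul_rowsub_mx mul1mx.
  by apply/matrixP => i j; rewrite !mxE.
by rewrite !det_mulmx mulrA.
Qed.

Lemma ideal_gen_comp_mpolyB N (S : {mpoly int[N]} -> Prop) (s : 'I_N -> {mpoly int[N]}) :
  (forall i, ideal_gen S ('X_i - s i)) ->
  forall p, ideal_gen S (p - (p \mPo [tuple s i | i < N])).
Proof.
move=> Ss; elim/mpolyind => [|c mon p _ _ Sp]; first by rewrite raddf0 subr0; apply: ideal_gen0.
rewrite raddfD /= comp_mpolyZ -!mul_mpolyC.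
set q := 'X_[mon] \mPo _.
have -> : c%:MP * 'X_[mon] + p - (c%:MP * q + (p \mPo [tuple s i | i < N]))
        = c%:MP * ('X_[mon] - q) + (p - (p \mPo [tuple s i | i < N])) by ring.
apply: ideal_genD => //; apply: ideal_genMl.
rewrite /q comp_mpolyX mpolyXE_id; apply: ideal_gen_prodB => i.
by rewrite tnth_mktuple; apply: ideal_gen_expB.
Qed.

Section CriticalIdealBounds.
Variables (N : nat) (mult : 'I_N -> 'I_N -> nat).
Implicit Type S : {mpoly int[N]} -> Prop.

(* Mod the ideal, X_u may be replaced by the diagonal entry of its class; the
   specialised Laplacian is then C blown up along cls, so each k x k minor is
   a multiple of det C. *)
Lemma critical_ideal_le_det S k (cls : 'I_N -> 'I_k) (C : 'M_k) :
  (forall u, ideal_gen S ('X_u - C (cls u) (cls u))) ->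
  (forall u v, u != v -> - (mult u v)%:R = C (cls u) (cls v)) ->
  ideal_gen S (\det C) ->
  forall p, critical_ideal mult k p -> ideal_gen S p.
Proof.
move=> Sdiag Coff SdetC; apply: ideal_gen_le => q [f [g [_ [_ ->]]]].
set M := \matrix_(i, j) _.
set sub := comp_mpoly [tuple C (cls u) (cls u) | u < N].
rewrite -(subrK (sub (\det M)) (\det M)).
apply: ideal_genD; first exact: ideal_gen_comp_mpolyB.
rewrite /sub -det_map_mx.
have -> : map_mx sub M = mxsub (cls \o f) (cls \o g) C.
  apply/matrixP => i j; rewrite !mxE /=.
  case: eqP => [->|/eqP fg]; last by rewrite -Coff // /sub comp_mpolyMNn comp_mpoly1.
  by rewrite /sub comp_mpolyXU -(tnth_nth 0) tnth_mktuple.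
by rewrite (det_mxsub C); apply: ideal_genMr; apply: ideal_genMl.
Qed.
End CriticalIdealBounds.

Lemma injective_lift_factor k (f : 'I_k -> 'I_k.+1) : injective f ->
  exists (r : 'I_k.+1) (s : 'I_k -> 'I_k), forall i, f i = lift r (s i).
Proof.
move=> injf; have [r /negP fr | codom_full] := pickP (fun r => r \notin codom f).
  exists r, (fun i => odflt i (unlift r (f i))) => i.
  by case: unliftP => [j -> // | rf]; case: fr; rewrite -rf codom_f.
suff : (#|'I_k.+1| <= #|codom f|)%N by rewrite card_codom // !card_ord ltnn.
apply/subset_leq_card/subsetP => r _; exact/negbFE/codom_full.
Qed.

Lemma critical_ideal_le_cominors k (mult : 'I_k.+1 -> 'I_k.+1 -> nat)
    (S : {mpoly int[k.+1]} -> Prop) :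
  (forall r c : 'I_k.+1, ideal_gen S
     (\det (\matrix_(i < k, j < k) gen_laplacian mult (lift r i) (lift c j)))) ->
  forall p, critical_ideal mult k p -> ideal_gen S p.
Proof.
move=> Scominor; apply: ideal_gen_le => q [f [g [injf [injg ->]]]].
have [r [s fE]] := injective_lift_factor injf.
have [c [t gE]] := injective_lift_factor injg.
pose B := \matrix_(i < k, j < k) gen_laplacian mult (lift r i) (lift c j).
have -> : \matrix_(i, j) gen_laplacian mult (f i) (g j) = mxsub s t B.
  by apply/matrixP => i j; rewrite !mxE fE gE.
by rewrite (det_mxsub B); apply/ideal_genMr/ideal_genMl; apply: Scominor.
Qed.

Definition tri_mx (R : pzRingType) (a : nat -> R) : 'M[R]_3 :=
  \matrix_(i, j) if i == j then a i else -1.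

Lemma det_tri_mx (R : comPzRingType) (a : nat -> R) :
  \det (tri_mx a) = a 0%N * a 1%N * a 2%N - a 0%N - a 1%N - a 2%N - 2%:R.
Proof. by rewrite det_mx33 !mxE /=; ring. Qed.

Lemma Xv_ord N (u : 'I_N) : Xv N u = 'X_u.
Proof. by rewrite /Xv valK. Qed.

Section CompleteTripartite.
Variables m n o : nat.
Local Notation N := (m + n + o)%N.
Local Notation R := {mpoly int[N]}.
Local Notation L := (gen_laplacian (Kmno_mult m n o)).
Local Notation I3 := (critical_ideal (Kmno_mult m n o) 3).
Local Notation part u := (tri_part m n (nat_of_ord u)).

Definition part_size (k : nat) : nat := nth 0%N [:: m; n; o] k.
Definition part_start (k : nat) : nat := nth 0%N [:: 0; m; m + n]%N k.

Lemma tri_partP (k : nat) : (k < N)%N ->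
  [/\ tri_part m n k < 3, part_start (tri_part m n k) <= k
    & k < part_start (tri_part m n k) + part_size (tri_part m n k)]%N.
Proof.
by rewrite /part_start /part_size /tri_part; case: ifP => ?; [|case: ifP => ?]; split => //=; lia.
Qed.

Lemma tri_part_eq (p k : nat) : (p < 3)%N ->
  (part_start p <= k < part_start p + part_size p)%N -> tri_part m n k = p.
Proof.
move=> p3 /andP[]; rewrite /part_start /part_size /tri_part.
by case: p p3 => [|[|[|]]] //= _ k1 k2; do 2?case: ifP; lia.
Qed.

Lemma part_lt3 (u : 'I_N) : (part u < 3)%N.
Proof. by case: (tri_partP (ltn_ord u)). Qed.

Lemma part_vertex (k j : nat) : (k < 3)%N -> (j < part_size k)%N ->
  exists u : 'I_N, part u = k /\ nat_of_ord u = (part_start k + j)%N.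
Proof.
move=> k3 jk; have uN : (part_start k + j < N)%N.
  by move: k3 jk; rewrite /part_start /part_size; case: k => [|[|[|]]] //=; lia.
exists (Ordinal uN); split=> //; apply: tri_part_eq => //=; lia.
Qed.

Lemma part_vertex_unique (u v : 'I_N) :
  part u = part v -> (part_size (part u) <= 1)%N -> u = v.
Proof.
move=> uv size1; have [_ u1 u2] := tri_partP (ltn_ord u).
have [_ v1 v2] := tri_partP (ltn_ord v).
by apply: ord_inj; move: v1 v2; rewrite -uv; lia.
Qed.

Lemma part_size_gt0 (u : 'I_N) : (0 < part_size (part u))%N.
Proof. by have [_ u1 u2] := tri_partP (ltn_ord u); lia. Qed.

Lemma part_ne2 : o = 0%N -> forall u : 'I_N, part u != 2%N.
Proof. by move=> o0 u; apply/eqP => u2; have := part_size_gt0 u; rewrite u2 /part_size /= o0. Qed.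

Lemma tri_part_eq0 (k : nat) : (tri_part m n k == 0%N) = (k < m)%N.
Proof. by rewrite /tri_part; do 2?case: ifP => ? //=; lia. Qed.

Lemma tri_part_eq2 (k : nat) : (tri_part m n k == 2%N) = (m + n <= k)%N.
Proof. by rewrite /tri_part; do 2?case: ifP => ? //=; lia. Qed.

Lemma part_neq (u v : 'I_N) : part u != part v -> u != v.
Proof. by apply: contraNneq => ->. Qed.

Lemma part_other (u : 'I_N) : (2 <= part_size (part u))%N ->
  exists v : 'I_N, part v = part u /\ v != u.
Proof.
move=> size2; have [_ u1 u2] := tri_partP (ltn_ord u).
pose j := if u == part_start (part u) :> nat then 1%N else 0%N.
have [|v [vu vE]] := @part_vertex (part u) j (part_lt3 u); first by rewrite /j; case: ifP; lia.
by exists v; split=> //; apply/eqP => vu'; move: vE; rewrite vu' /j; case: eqP; lia.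
Qed.

Lemma part_two_others (u : 'I_N) : (3 <= part_size (part u))%N ->
  exists a b : 'I_N, [/\ part a = part u, part b = part u, a != u, b != u & a != b].
Proof.
move=> size3; have [_ u1 u2] := tri_partP (ltn_ord u).
pose i := (u - part_start (part u))%N.
pose ja := if i == 0%N then 1%N else 0%N.
pose jb := if i == 2%N then 1%N else 2%N.
have [|a [au aE]] := @part_vertex (part u) ja (part_lt3 u); first by rewrite /ja; case: ifP; lia.
have [|b [bu bE]] := @part_vertex (part u) jb (part_lt3 u); first by rewrite /jb; case: ifP; lia.
exists a, b; split=> //; apply/eqP => E; move: aE bE; rewrite ?E /ja /jb /i;
  by do 2?case: eqP; lia.
Qed.

Lemma part_two (k : nat) : (k < 3)%N -> (2 <= part_size k)%N ->
  exists a b : 'I_N, [/\ part a = k, part b = k & a != b].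
Proof.
move=> k3 size2; have [a [ak aE]] := @part_vertex k 0 k3 (ltnW size2).
have [b [bk bE]] := @part_vertex k 1 k3 size2.
by exists a, b; split=> //; apply/eqP => ab; move: aE; rewrite ab bE; lia.
Qed.

Lemma part_one (k : nat) : (k < 3)%N -> (0 < part_size k)%N -> exists a : 'I_N, part a = k.
Proof. by move=> k3 size1; have [a [ak _]] := @part_vertex k 0 k3 size1; exists a. Qed.

Lemma other_parts (p : nat) : (p < 3)%N ->
  exists A B : nat, [/\ (A < 3)%N, (B < 3)%N, A != p, B != p & A != B].
Proof. by case: p => [|[|[|]]] // _; [exists 1%N, 2%N | exists 0%N, 2%N | exists 0%N, 1%N]. Qed.

Lemma third_part (p q : nat) : (p < 3)%N -> (q < 3)%N -> p != q ->
  exists B : nat, [/\ (B < 3)%N, B != p & B != q].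
Proof. by move=> p3 q3 pq; exists (3 - p - q)%N; case: p q p3 q3 pq => [|[|[|]]] [|[|[|]]]. Qed.

Lemma Kmno_laplacianE (u v : 'I_N) :
  L u v = if part u == part v then (if u == v then 'X_u else 0) else -1.
Proof.
rewrite mxE /Kmno_mult; have [->|uv] := eqVneq u v; first by rewrite !eqxx.
by case: eqP => //= _; rewrite oppr0.
Qed.

Definition ord3 (a b c : 'I_N) (i : 'I_3) : 'I_N :=
  if val i == 0%N then a else if val i == 1%N then b else c.

Lemma ord3_inj a b c : a != b -> a != c -> b != c -> injective (ord3 a b c).
Proof.
move=> ab ac bc [[|[|[|i]]] i3] [[|[|[|j]]] j3] //= E; apply/val_inj => //=;
  move: E; rewrite /ord3 /= => E; subst; by rewrite ?eqxx in ab ac bc.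
Qed.

Lemma minor_mem (a b c d e f : 'I_N) :
  a != b -> a != c -> b != c -> d != e -> d != f -> e != f ->
  I3 (L a d * (L b e * L c f - L b f * L c e)
    - L a e * (L b d * L c f - L b f * L c d)
    + L a f * (L b d * L c e - L b e * L c d)).
Proof.
move=> ab ac bc de df ef; apply: mem_ideal_gen.
exists (ord3 a b c), (ord3 d e f).
by split; [|split]; [exact: ord3_inj | exact: ord3_inj | rewrite det_mx33 !mxE].
Qed.

Ltac rewrite_parts :=
  repeat match goal with H : tri_part _ _ _ = _ |- _ => rewrite H end.
Ltac neq_from_hyps := solve [ done | assumption | rewrite eq_sym; assumption ].
Ltac neq_vertices :=
  solve [ neq_from_hyps | apply: part_neq; rewrite_parts; neq_from_hyps ].

(* Evaluates the entries of the minor from the part and distinctness hypotheses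
   and identifies it with the goal's polynomial up to sign. *)
Ltac minor_is_goal :=
  move=> /(_ ltac:(neq_vertices) ltac:(neq_vertices) ltac:(neq_vertices)
            ltac:(neq_vertices) ltac:(neq_vertices) ltac:(neq_vertices));
  rewrite !Kmno_laplacianE; rewrite_parts; rewrite /= ?eqxx;
  repeat match goal with
    | H : is_true (?x != ?y) |- context [?x == ?y] => rewrite (negbTE H)
    | H : is_true (?y != ?x) |- context [?x == ?y] => rewrite (eq_sym x y) (negbTE H)
  end;
  move=> minor; match goal with minor : _ ?t |- _ ?g =>
    first [ (suff -> : g = - t by apply: ideal_genN); ring
          | (suff -> : g = t by []); ring ] end.

Lemma two_mem : (forall k, k < 3 -> 2 <= part_size k)%N -> I3 2%:R.
Proof.
move=> size2.
have [a [a' [a0 a'0 aa']]] := @part_two 0 isT (size2 0 isT).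
have [b [b' [b1 b'1 bb']]] := @part_two 1 isT (size2 1 isT).
have [c [c' [c2 c'2 cc']]] := @part_two 2 isT (size2 2 isT).
by have := @minor_mem a b c a' b' c'; minor_is_goal.
Qed.

Lemma X_add2_mem (u : 'I_N) :
  (forall k, k < 3 -> k != part u -> 2 <= part_size k)%N -> I3 ('X_u + 2%:R).
Proof.
move=> size2; have [A [B [A3 B3 Au Bu AB]]] := other_parts (part_lt3 u).
have [a [a' [aA a'A aa']]] := part_two A3 (size2 A A3 Au).
have [b [b' [bB b'B bb']]] := part_two B3 (size2 B B3 Bu).
by have := @minor_mem u a b u a' b'; minor_is_goal.
Qed.

Lemma X_addX_add2_mem (u z : 'I_N) : part u != part z ->
  (forall k, k < 3 -> k != part u -> k != part z -> 2 <= part_size k)%N ->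
  I3 ('X_u + 'X_z + 2%:R).
Proof.
move=> uz size2; have [B [B3 Bu Bz]] := third_part (part_lt3 u) (part_lt3 z) uz.
have [b [b' [bB b'B bb']]] := part_two B3 (size2 B B3 Bu Bz).
by have := @minor_mem u b z u b' z; minor_is_goal.
Qed.

Lemma X_mem (u w : 'I_N) : part u != part w -> (3 <= part_size (part u))%N -> I3 'X_u.
Proof.
move=> uw size3; have [a [b [au bu au' bu' ab]]] := part_two_others size3.
by have := @minor_mem u a w u b w; minor_is_goal.
Qed.

Lemma X_addX_mem (u v : 'I_N) (A : nat) : u != v -> part v = part u ->
  (A < 3)%N -> A != part u -> (2 <= part_size A)%N -> I3 ('X_u + 'X_v).
Proof.
move=> uv vu A3 Au size2; have [a [a' [aA a'A aa']]] := part_two A3 size2.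
by have := @minor_mem u v a u v a'; minor_is_goal.
Qed.

Lemma X_mulX_mem (u v : 'I_N) : part u != part v ->
  (2 <= part_size (part u))%N -> (2 <= part_size (part v))%N -> I3 ('X_u * 'X_v).
Proof.
move=> uv size2u size2v.
have [u' [u'u u'u']] := part_other size2u; have [v' [v'v v'v']] := part_other size2v.
by have := @minor_mem u v u' u v v'; minor_is_goal.
Qed.

Lemma X_mulX_addX_addX_mem (u u' : 'I_N) : u != u' -> part u' = part u ->
  (forall k, k < 3 -> k != part u -> 0 < part_size k)%N ->
  I3 ('X_u * 'X_u' + 'X_u + 'X_u').
Proof.
move=> uu' u'u size1; have [A [B [A3 B3 Au Bu AB]]] := other_parts (part_lt3 u).
have [w wA] := part_one A3 (size1 A A3 Au); have [w' w'B] := part_one B3 (size1 B B3 Bu).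
by have := @minor_mem u u' w u u' w'; minor_is_goal.
Qed.

Lemma X_mulX_addX_mem (u z : 'I_N) : part u != part z -> (2 <= part_size (part u))%N ->
  (forall k, k < 3 -> k != part u -> k != part z -> 0 < part_size k)%N ->
  I3 ('X_u * 'X_z + 'X_u).
Proof.
move=> uz size2 size1; have [u' [u'u u'u']] := part_other size2.
have [B [B3 Bu Bz]] := third_part (part_lt3 u) (part_lt3 z) uz.
have [y yB] := part_one B3 (size1 B B3 Bu Bz).
by have := @minor_mem u y z u u' z; minor_is_goal.
Qed.

Lemma critical_ideal3_Kmno_le (S : R -> Prop) (a : nat -> R) :
  (forall u, ideal_gen S ('X_u - a (part u))) ->
  (forall u v : 'I_N, u != v -> part u = part v -> a (part u) = 0) ->
  ideal_gen S (\det (tri_mx a)) -> forall p, I3 p -> ideal_gen S p.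
Proof.
move=> Sdiag a0 Sdet; have partK (u : 'I_N) : nat_of_ord (inord (part u) : 'I_3) = part u.
  by rewrite inordK // part_lt3.
apply: (critical_ideal_le_det (cls := fun u => inord (part u))) Sdet => [u|u v uv].
  by rewrite mxE eqxx partK.
rewrite mxE -val_eqE /= !partK /Kmno_mult.
by case: eqP => [uv'|//]; rewrite (a0 u v uv uv') oppr0.
Qed.

Lemma critical_ideal3_Kmno_o_ge2 : (n <= m)%N -> (o <= n)%N -> (2 <= o)%N ->
  forall p, I3 p <-> ideal_gen (fun q => q = 2%:R \/ exists u : 'I_N, q = 'X_u) p.
Proof.
move=> nm on o2; have size2 k : (k < 3 -> 2 <= part_size k)%N.
  by rewrite /part_size; case: k => [|[|[|]]] //= _; lia.
split.
  apply: (@critical_ideal3_Kmno_le _ (fun=> 0)) => [u|//|].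
    by rewrite subr0; apply: mem_ideal_gen; right; exists u.
  rewrite det_tri_mx (_ : _ - _ = - 2%:R); last by ring.
  by apply/ideal_genN/mem_ideal_gen; left.
apply: ideal_gen_le => q [->|[u ->]]; first exact: two_mem.
rewrite -(addrK 2%:R 'X_u); apply: ideal_genB; last exact: two_mem.
by apply: X_add2_mem => k k3 _; apply: size2.
Qed.

Lemma critical_ideal3_Kmno_o1 : (n <= m)%N -> (2 <= n)%N -> o = 1%N ->
  forall p, I3 p <-> ideal_gen (fun q =>
    (exists u : 'I_N, (val u < m + n)%N /\ q = 'X_u) \/ q = zv m n o 1 + 2%:R) p.
Proof.
move=> nm n2 o1; have [|z [z2 zE]] := @part_vertex 2 0 isT; first by rewrite /part_size /= o1.
have z_uniq (u : 'I_N) : part u = 2%N -> u = z.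
  by move=> u2; apply: part_vertex_unique; rewrite u2 ?z2 // /part_size /= o1.
have -> : zv m n o 1 = 'X_z by rewrite -Xv_ord zE.
split.
  apply: (@critical_ideal3_Kmno_le _ (fun k => if k == 2%N then - 2%:R else 0)).
  - move=> u; case: eqP => [/z_uniq ->|/eqP u2].
      by rewrite opprK; apply: mem_ideal_gen; right.
    rewrite subr0; apply: mem_ideal_gen; left; exists u; split=> //.
    by rewrite ltnNge -tri_part_eq2.
  - move=> u v uv uvp; case: eqP => // u2.
    by move: uv; rewrite (z_uniq u u2) (z_uniq v) ?eqxx // -uvp.
  - by apply: ideal_gen_eq0; rewrite det_tri_mx /=; ring.
have size2 k : (k < 3 -> k != 2 -> 2 <= part_size k)%N.
  by rewrite /part_size; case: k => [|[|[|]]] //= _; lia.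
have Xz_add2 : I3 ('X_z + 2%:R) by apply: X_add2_mem => k k3; rewrite z2; apply: size2.
apply: ideal_gen_le => q [[u [uz ->]]|->] //.
have u2 : part u != 2%N by rewrite tri_part_eq2 -ltnNge.
rewrite -(addrK ('X_z + 2%:R) 'X_u) addrA; apply: ideal_genB => //.
by apply: X_addX_add2_mem; rewrite ?z2 // => k k3 _; apply: size2.
Qed.

Lemma critical_ideal3_Kmno_n1o1 : (3 <= m)%N -> n = 1%N -> o = 1%N ->
  forall p, I3 p <-> ideal_gen (fun q => (exists u : 'I_N, (val u < m)%N /\ q = 'X_u)
    \/ q = yv m n o 1 + zv m n o 1 + 2%:R) p.
Proof.
move=> m3 n1 o1.
have [|y [y1 yE]] := @part_vertex 1 0 isT; first by rewrite /part_size /= n1.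
have [|z [z2 zE]] := @part_vertex 2 0 isT; first by rewrite /part_size /= o1.
have single (u v : 'I_N) : part u = part v -> part u != 0%N -> u = v.
  move=> uv u0; apply: part_vertex_unique => //; move: u0 (part_lt3 u).
  by rewrite /part_size; case: (tri_part _ _ _) => [|[|[|]]] //=; rewrite ?n1 ?o1.
have -> : yv m n o 1 = 'X_y by rewrite -Xv_ord yE.
have -> : zv m n o 1 = 'X_z by rewrite -Xv_ord zE.
split.
  apply: (@critical_ideal3_Kmno_le _ (fun k =>
    if k == 0%N then 0 else if k == 1%N then - 'X_z - 2%:R else 'X_z)).
  - move=> u; case: eqP => [u0|/eqP u0].
      by rewrite subr0; apply: mem_ideal_gen; left; exists u; rewrite -tri_part_eq0 u0.
    case: eqP => [u1|/eqP u1].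
      rewrite (single u y) ?y1 // (_ : _ - _ = 'X_y + 'X_z + 2%:R); last by ring.
      by apply: mem_ideal_gen; right.
    have u2 : part u = part z.
      by rewrite z2; move: u0 u1 (part_lt3 u); case: (tri_part _ _ _) => [|[|[|]]].
    by rewrite (single u z) // subrr; apply: ideal_gen0.
  - by move=> u v uv uvp; case: eqP => // /eqP u0; rewrite (single u v) ?eqxx in uv.
  - by apply: ideal_gen_eq0; rewrite det_tri_mx /=; ring.
apply: ideal_gen_le => q [[u [um ->]]|->].
  have u0 : part u = 0%N by apply/eqP; rewrite tri_part_eq0.
  by apply: (@X_mem u y); rewrite u0 ?y1.
apply: X_addX_add2_mem; rewrite y1 z2 // => k k3 k1 k2.
by rewrite /part_size; case: k k3 k1 k2 => [|[|[|]]] //=; lia.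
Qed.

Lemma critical_ideal3_Kmn_n_ge3 : (n <= m)%N -> (3 <= n)%N -> o = 0%N ->
  forall p, I3 p <-> ideal_gen (fun q => exists u : 'I_N, (val u < m + n)%N /\ q = 'X_u) p.
Proof.
move=> nm n3 o0; have no_part2 := part_ne2 o0.
(* Part 2 is empty, so its diagonal value is free; -2 makes det (tri_mx a) vanish. *)
split.
  apply: (@critical_ideal3_Kmno_le _ (fun k => if k == 2%N then - 2%:R else 0)).
  - move=> u; rewrite (negbTE (no_part2 u)) subr0; apply: mem_ideal_gen.
    by exists u; rewrite ltnNge -tri_part_eq2 no_part2.
  - by move=> u v _ _; rewrite (negbTE (no_part2 u)).
  - by apply: ideal_gen_eq0; rewrite det_tri_mx /=; ring.
apply: ideal_gen_le => q [u [_ ->]].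
have size3 k : (k < 2)%N -> (3 <= part_size k)%N.
  by rewrite /part_size; case: k => [|[|]] //= _; lia.
have u01 : (part u < 2)%N.
  by move: (part_lt3 u) (no_part2 u); case: (tri_part _ _ _) => [|[|[|]]].
have [||w wu] := @part_one (1 - part u); [lia | by apply: leq_trans (size3 _ _); lia |].
by apply: (@X_mem u w); [rewrite wu; lia | apply: size3].
Qed.

Lemma critical_ideal3_Km1 : (3 <= m)%N -> n = 1%N -> o = 0%N ->
  forall p, I3 p <-> ideal_gen (fun q => exists u : 'I_N, (val u < m)%N /\ q = 'X_u) p.
Proof.
move=> m3 n1 o0; have no_part2 := part_ne2 o0.
have [|y [y1 _]] := @part_vertex 1 0 isT; first by rewrite /part_size /= n1.
have center (u : 'I_N) : part u = 1%N -> u = y.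
  by move=> u1; apply: part_vertex_unique; rewrite u1 ?y1 // /part_size /= n1.
split.
  apply: (@critical_ideal3_Kmno_le _ (fun k =>
    if k == 1%N then 'X_y else if k == 2%N then - 'X_y - 2%:R else 0)).
  - move=> u; rewrite (negbTE (no_part2 u)); case: eqP => [/center -> | /eqP u1].
      by rewrite subrr; apply: ideal_gen0.
    rewrite subr0; apply: mem_ideal_gen; exists u; split=> //; rewrite -tri_part_eq0.
    by move: (part_lt3 u) u1 (no_part2 u); case: (tri_part _ _ _) => [|[|[|]]].
  - move=> u v uv uvp; rewrite (negbTE (no_part2 u)); case: eqP => // u1.
    by move: uv; rewrite (center u u1) (center v) -?uvp ?eqxx.
  - by apply: ideal_gen_eq0; rewrite det_tri_mx /=; ring.
apply: ideal_gen_le => q [u [um ->]].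
have u0 : part u = 0%N by apply/eqP; rewrite tri_part_eq0.
by apply: (@X_mem u y); rewrite u0 ?y1.
Qed.

Lemma critical_ideal3_Km2 : (3 <= m)%N -> n = 2%N -> o = 0%N ->
  forall p, I3 p <-> ideal_gen (fun q => (exists u : 'I_N, (val u < m)%N /\ q = 'X_u)
    \/ q = yv m n o 1 + yv m n o 2) p.
Proof.
move=> m3 n2 o0; have no_part2 := part_ne2 o0.
have [|y1 [y1p y1E]] := @part_vertex 1 0 isT; first by rewrite /part_size /= n2.
have [|y2 [y2p y2E]] := @part_vertex 1 1 isT; first by rewrite /part_size /= n2.
have y12 : (y1 == y2) = false by apply/eqP => y12; move: y1E; rewrite y12 y2E; lia.
have y21 : (y2 == y1) = false by rewrite eq_sym.
have vertex_cases (u : 'I_N) : part u = 0%N \/ u = y1 \/ u = y2.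
  have [_] := tri_partP (ltn_ord u); move: (no_part2 u) (part_lt3 u).
  rewrite /part_start /part_size; case: (tri_part _ _ _) => [|[|[|]]] //=; first by left.
  move=> _ _ u1 u2; right; case: (ltnP u (m + 1)) => ?; [left | right];
    by apply: ord_inj; rewrite ?y1E ?y2E /part_start /=; lia.
have -> : yv m n o 1 = 'X_y1 by rewrite -Xv_ord y1E.
have -> : yv m n o 2 = 'X_y2 by rewrite -Xv_ord y2E.
pose cls (u : 'I_N) : 'I_3 := if part u == 0%N then 0 else if u == y1 then 1 else 2%:R.
pose C : 'M[R]_3 := \matrix_(i, j)
  if i == j then (if i == 0 then 0 else if i == 1 then 'X_y1 else - 'X_y1)
  else if (i == 0) || (j == 0) then (-1) else 0.
split.
  apply: (critical_ideal_le_det (cls := cls) (C := C)).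
  - move=> u; rewrite mxE eqxx /cls.
    case: (vertex_cases u) => [u0|[]->]; rewrite ?u0 ?y1p ?y2p ?eqxx ?y12 ?y21 /=.
    + by rewrite subr0; apply: mem_ideal_gen; left; exists u; rewrite -tri_part_eq0 u0.
    + by rewrite subrr; apply: ideal_gen0.
    + by rewrite opprK addrC; apply: mem_ideal_gen; right.
  - move=> u v; rewrite mxE /cls /Kmno_mult.
    case: (vertex_cases u) => [u0|[]->]; case: (vertex_cases v) => [v0|[]->];
      by rewrite ?u0 ?v0 ?y1p ?y2p ?eqxx ?y12 ?y21 //= oppr0.
  - by apply: ideal_gen_eq0; rewrite /C det_mx33 !mxE /=; ring.
apply: ideal_gen_le => q [[u [um ->]]|->].
  have u0 : part u = 0%N by apply/eqP; rewrite tri_part_eq0.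
  by apply: (@X_mem u y1); rewrite u0 ?y1p.
by apply: (@X_addX_mem y1 y2 0); rewrite ?y1p ?y2p ?y12 ?y21 // /part_size /=; lia.
Qed.

End CompleteTripartite.

Section FourVertices.

Local Notation X k := (Xv 4 k).

Lemma Xv4 (u : 'I_4) : 'X_u = X u.
Proof. exact: (esym (Xv_ord u)). Qed.

(* [val (lift r i)] only reduces to a numeral under full computation. *)
Ltac normX := repeat match goal with |- context [Xv 4 ?k] =>
  lazymatch k with 0%N => fail | 1%N => fail | 2%N => fail | 3%N => fail
  | _ => let k' := eval compute in k in change (Xv 4 k) with (Xv 4 k') end end.

Lemma critical_ideal3_K22 (p : {mpoly int[4]}) : critical_ideal (Kmno_mult 2 2 0) 3 p <->
  ideal_gen (fun q => q = xv 2 2 0 2 * yv 2 2 0 2 \/ q = xv 2 2 0 1 + xv 2 2 0 2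
                      \/ q = yv 2 2 0 1 + yv 2 2 0 2) p.
Proof.
rewrite /xv /yv /=; set S := (fun q => _).
have g1 : ideal_gen S (X 1 * X 3) by apply: mem_ideal_gen; left.
have g2 : ideal_gen S (X 0 + X 1) by apply: mem_ideal_gen; right; left.
have g3 : ideal_gen S (X 2 + X 3) by apply: mem_ideal_gen; right; right.
have comb a1 a2 a3 p := @ideal_gen_comb3 _ _ _ _ _ a1 a2 a3 p g1 g2 g3.
split.
  apply: critical_ideal_le_cominors => r c.
  case: r => [[|[|[|[|r]]]] Hr] //; case: c => [[|[|[|[|c]]]] Hc] //;
    rewrite det_mx33 !mxE /Kmno_mult /tri_part !Xv4 /=; normX.
  - by apply: (comb (X 2) 0 (-1)); ring.
  - by apply: (comb 0 0 (-1)); ring.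
  - by apply: (comb 1 0 0); ring.
  - by apply: (comb 1 0 (- X 1)); ring.
  - by apply: (comb 0 0 (-1)); ring.
  - by apply: (comb (- X 2) (X 2 * X 3) (-1)); ring.
  - by apply: (comb 1 (- X 3) 0); ring.
  - by apply: (comb 1 (X 2) (- X 1)); ring.
  - by apply: (comb 1 0 0); ring.
  - by apply: (comb 1 (- X 3) 0); ring.
  - by apply: (comb (X 0) (-1) 0); ring.
  - by apply: (comb 0 (-1) 0); ring.
  - by apply: (comb 1 0 (- X 1)); ring.
  - by apply: (comb 1 (X 2) (- X 1)); ring.
  - by apply: (comb 0 (-1) 0); ring.
  - by apply: (comb (X 1) (-1 + X 1 * X 2) (- X 1 ^+ 2)); ring.
apply: ideal_gen_le => q [->|[->|->]].
- have := @X_mulX_mem 2 2 0 (Ordinal (isT : (1 < 4)%N)) (Ordinal (isT : (3 < 4)%N)).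
  by rewrite !Xv4; apply.
- have := @X_addX_mem 2 2 0 (Ordinal (isT : (0 < 4)%N)) (Ordinal (isT : (1 < 4)%N)) 1.
  by rewrite !Xv4; apply.
- have := @X_addX_mem 2 2 0 (Ordinal (isT : (2 < 4)%N)) (Ordinal (isT : (3 < 4)%N)) 0.
  by rewrite !Xv4; apply.
Qed.

Lemma critical_ideal3_K211 (p : {mpoly int[4]}) : critical_ideal (Kmno_mult 2 1 1) 3 p <->
  ideal_gen (fun q => q = xv 2 1 1 1 * xv 2 1 1 2 + xv 2 1 1 1 + xv 2 1 1 2
    \/ q = xv 2 1 1 1 * zv 2 1 1 1 + xv 2 1 1 1 \/ q = xv 2 1 1 2 * zv 2 1 1 1 + xv 2 1 1 2
    \/ q = yv 2 1 1 1 + zv 2 1 1 1 + 2%:R) p.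
Proof.
rewrite /xv /yv /zv /=; set S := (fun q => _).
have g1 : ideal_gen S (X 0 * X 1 + X 0 + X 1) by apply: mem_ideal_gen; left.
have g2 : ideal_gen S (X 0 * X 3 + X 0) by apply: mem_ideal_gen; right; left.
have g3 : ideal_gen S (X 1 * X 3 + X 1) by apply: mem_ideal_gen; right; right; left.
have g4 : ideal_gen S (X 2 + X 3 + 2%:R) by apply: mem_ideal_gen; right; right; right.
have comb a1 a2 a3 a4 p := @ideal_gen_comb4 _ _ _ _ _ _ a1 a2 a3 a4 p g1 g2 g3 g4.
split.
  apply: critical_ideal_le_cominors => r c.
  case: r => [[|[|[|[|r]]]] Hr] //; case: c => [[|[|[|[|c]]]] Hc] //;
    rewrite det_mx33 !mxE /Kmno_mult /tri_part !Xv4 /=; normX.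
  - by apply: (comb 0 0 (1 + X 2) (-1 - X 1)); ring.
  - by apply: (comb 0 0 0 (-1)); ring.
  - by apply: (comb 0 0 1 0); ring.
  - by apply: (comb 0 0 1 (- X 1)); ring.
  - by apply: (comb 0 0 0 (-1)); ring.
  - by apply: (comb 0 (1 + X 2) 0 (-1 - X 0)); ring.
  - by apply: (comb 0 (-1) 0 0); ring.
  - by apply: (comb 0 (-1) 0 (X 0)); ring.
  - by apply: (comb 0 0 1 0); ring.
  - by apply: (comb 0 (-1) 0 0); ring.
  - by apply: (comb (X 3) (-1) (-1) 0); ring.
  - by apply: (comb (-1) 0 0 0); ring.
  - by apply: (comb 0 0 1 (- X 1)); ring.
  - by apply: (comb 0 (-1) 0 (X 0)); ring.
  - by apply: (comb (-1) 0 0 0); ring.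
  - by apply: (comb (X 2) 1 1 (- X 1 - X 0)); ring.
apply: ideal_gen_le => q [->|[->|[->|->]]].
- have := @X_mulX_addX_addX_mem 2 1 1 (Ordinal (isT : (0 < 4)%N)) (Ordinal (isT : (1 < 4)%N)).
  by rewrite !Xv4; apply=> // -[|[|[|]]].
- have := @X_mulX_addX_mem 2 1 1 (Ordinal (isT : (0 < 4)%N)) (Ordinal (isT : (3 < 4)%N)).
  by rewrite !Xv4; apply=> // -[|[|[|]]].
- have := @X_mulX_addX_mem 2 1 1 (Ordinal (isT : (1 < 4)%N)) (Ordinal (isT : (3 < 4)%N)).
  by rewrite !Xv4; apply=> // -[|[|[|]]].
- have := @X_addX_add2_mem 2 1 1 (Ordinal (isT : (2 < 4)%N)) (Ordinal (isT : (3 < 4)%N)).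
  by rewrite !Xv4; apply=> // -[|[|[|]]].
Qed.

End FourVertices.

Theorem theorem4p4 (m n o : nat) :
  (n <= m)%N -> (o <= n)%N -> (4 <= m + n + o)%N ->
  graph_connected (Kmno_adj m n o) ->
  let I3 := critical_ideal (Kmno_mult m n o) 3 in
  let x := xv m n o in let y := yv m n o in let z := zv m n o in
  let V := fun i : 'I_(m + n + o) => ('X_i : {mpoly int[m + n + o]}) in
  (   ((2 <= o)%N ->
     forall p, I3 p <-> ideal_gen (fun q => q = 2%:R \/ exists i, q = V i) p) /\
   ((2 <= n)%N -> o = 1%N ->
     forall p, I3 p <-> ideal_gen (fun q =>
        (exists i, (val i < m + n)%N /\ q = V i) \/ q = z 1%N + 2%:R) p) /\
   ((3 <= m)%N -> n = 1%N -> o = 1%N ->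
     forall p, I3 p <-> ideal_gen (fun q =>
        (exists i, (val i < m)%N /\ q = V i) \/ q = y 1%N + z 1%N + 2%:R) p) /\
   (m = 2%N -> n = 1%N -> o = 1%N ->
     forall p, I3 p <-> ideal_gen (fun q =>
        (q = x 1%N * x 2%N + x 1%N + x 2%N \/ q = x 1%N * z 1%N + x 1%N
          \/ q = x 2%N * z 1%N + x 2%N \/ q = y 1%N + z 1%N + 2%:R)) p) /\
   ((3 <= n)%N -> o = 0%N ->
     forall p, I3 p <-> ideal_gen (fun q =>
        exists i, (val i < m + n)%N /\ q = V i) p) /\
   ((3 <= m)%N -> n = 2%N -> o = 0%N ->
     forall p, I3 p <-> ideal_gen (fun q =>
        (exists i, (val i < m)%N /\ q = V i) \/ q = y 1%N + y 2%N) p) /\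
   (m = 2%N -> n = 2%N -> o = 0%N ->
     forall p, I3 p <-> ideal_gen (fun q =>
        (q = x 2%N * y 2%N \/ q = x 1%N + x 2%N \/ q = y 1%N + y 2%N)) p) /\
   ((3 <= m)%N -> n = 1%N -> o = 0%N ->
     forall p, I3 p <-> ideal_gen (fun q =>
        exists i, (val i < m)%N /\ q = V i) p)).
Proof.
move=> nm on _ _; cbv zeta.
split; first exact: critical_ideal3_Kmno_o_ge2 nm on.
split; first exact: critical_ideal3_Kmno_o1 nm.
split; first exact: critical_ideal3_Kmno_n1o1.
split; first by move=> m2 n1 o1; subst m n o; exact: critical_ideal3_K211.
split; first exact: critical_ideal3_Kmn_n_ge3 nm.
split; first exact: critical_ideal3_Km2.
split; first by move=> m2 n2 o0; subst m n o; exact: critical_ideal3_K22.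
exact: critical_ideal3_Km1.
Qed.
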